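(* Let $f\in\mathcal N(J)^\perp$ and let $(f_n)$, $(p_n^* )$ be generated by the scheme (S). Then $$\sum_{n=0}^\infty\|f_{n+1}-f_n\|^2=\sum_{n=0}^\infty\frac{\langle f_n,p_n^*\rangle^2}{\|p_n^*\|^2}<\infty.$$
   Context: Let $\mathcal H$ be a real Hilbert space and $J:\mathcal H\to\mathbb R\cup\{+\infty\}$ a proper, convex, lower semicontinuous, absolutely one-homogeneous functional ($J(\alpha u)=|\alpha|J(u)$). Let $\mathcal N(J)=\{u: J(u)=0\}$ be its null-space, and assume the Poincaré-type inequality: there is $C>0$ with $\|u\|\le C J(u)$ for all $u\in\mathcal N(J)^\perp$. $\partial J$ denotes the convex subdifferential. Gradient flow: for $g\in\mathcal H$, the gradient flow of $J$ with datum $g$ is the solution $u$ of $u'(t)=-p(t)$, $p(t)\in\partial J(u(t))$, $u(0)=g$, where $p(t)$ is the element of minimal norm in $\partial J(u(t))$. For $g\in\mathcal N(J)^\perp\setminus\{0\}$ the flow extinguishes at a finite time $T>0$. An extinction profile of $g$ is any element $p^*=\lim_{k\to\infty}\frac{1}{T-t_k}\int_{t_k}^T p(s)\,ds$ for some increasing sequence $t_k\to T$ along which the limit exists; it is known that such $p^*$ exists, $p^*\neq 0$ and $p^*\in\partial J(p^* )$. Scheme (S): given $f\in\mathcal N(J)^\perp$, set $f_0=f$ and for $n\ge0$ let $p_n^*$ be an extinction profile of $f_n$, $c_n=\langle f_n,p_n^*\rangle/\|p_n^*\|^2$, and $f_{n+1}=f_n-c_np_n^*$. (If some $f_n=0$,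 the scheme is stopped and we set $f_m=0$ and the corresponding terms $\langle f_m,p_m^*\rangle^2/\|p_m^*\|^2$, $c_mp_m^*$ equal to $0$ for $m\ge n$.) *)

From Stdlib Require Import Reals Lra.
Open Scope R_scope.

Record Hilbert := {
  Hcar :> Type;
  hzero : Hcar;
  hadd : Hcar -> Hcar -> Hcar;
  hopp : Hcar -> Hcar;
  hscal : R -> Hcar -> Hcar;
  hinner : Hcar -> Hcar -> R;
  hadd_assoc : forall x y z, hadd x (hadd y z) = hadd (hadd x y) z;
  hadd_comm : forall x y, hadd x y = hadd y x;
  hadd_0 : forall x, hadd x hzero = x;
  hadd_opp : forall x, hadd x (hopp x) = hzero;
  hscal_assoc : forall a b x, hscal a (hscal b x) = hscal (a * b) x;
  hscal_1 : forall x, hscal 1 x = x;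
  hscal_distr_v : forall a x y, hscal a (hadd x y) = hadd (hscal a x) (hscal a y);
  hscal_distr_s : forall a b x, hscal (a + b) x = hadd (hscal a x) (hscal b x);
  hinner_sym : forall x y, hinner x y = hinner y x;
  hinner_add_l : forall x y z, hinner (hadd x y) z = hinner x z + hinner y z;
  hinner_scal_l : forall a x y, hinner (hscal a x) y = a * hinner x y;
  hinner_pos : forall x, 0 <= hinner x x;
  hinner_def : forall x, hinner x x = 0 -> x = hzero;
  hcomplete : forall u : nat -> Hcar,
    (forall eps, 0 < eps -> exists N, forall m n, (N <= m)%nat -> (N <= n)%nat ->
        sqrt (hinner (hadd (u m) (hopp (u n))) (hadd (u m) (hopp (u n)))) < eps) ->
    exists l, forall eps, 0 < eps -> exists N, forall n, (N <= n)%nat ->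
        sqrt (hinner (hadd (u n) (hopp l)) (hadd (u n) (hopp l))) < eps
}.

Arguments hzero {_}.
Arguments hadd {_}.
Arguments hopp {_}.
Arguments hscal {_}.
Arguments hinner {_}.

Definition hsub {H : Hilbert} (x y : H) : H := hadd x (hopp y).
Definition hnorm {H : Hilbert} (x : H) : R := sqrt (hinner x x).

Definition hconv {H : Hilbert} (a : nat -> H) (l : H) : Prop :=
  forall eps, 0 < eps -> exists N, forall n, (N <= n)%nat -> hnorm (hsub (a n) l) < eps.

(** * Extended-real-valued functionals: [None] stands for [+infinity]. *)
Definition ERle (a b : option R) : Prop :=
  match a, b with
  | _, None => True
  | None, Some _ => False
  | Some x, Some y => x <= y
  end.

Definition ERlt (a b : option R) : Prop :=
  match a, b with
  | None, _ => False
  | Some _, None => True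
  | Some x, Some y => x < y
  end.

Definition proper {H : Hilbert} (J : H -> option R) : Prop :=
  exists u, J u <> None.

Definition convex {H : Hilbert} (J : H -> option R) : Prop :=
  forall u v l, 0 <= l <= 1 ->
    ERle (J (hadd (hscal l u) (hscal (1 - l) v)))
         (match J u, J v with
          | Some a, Some b => Some (l * a + (1 - l) * b)
          | _, _ => None
          end).

Definition lsc {H : Hilbert} (J : H -> option R) : Prop :=
  forall u c, ERlt (Some c) (J u) ->
    exists delta, 0 < delta /\
      forall v, hnorm (hsub v u) < delta -> ERlt (Some c) (J v).

(** absolute one-homogeneity, with the convention 0 * (+infinity) = 0 *)
Definition abs_one_homogeneous {H : Hilbert} (J : H -> option R) : Prop :=
  forall (a : R) (u : H),
    J (hscal a u) = (if Req_dec_T a 0 then Some 0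
                     else option_map (fun r => Rabs a * r) (J u)).

Definition nullJ {H : Hilbert} (J : H -> option R) (u : H) : Prop := J u = Some 0.

Definition nullJ_perp {H : Hilbert} (J : H -> option R) (v : H) : Prop :=
  forall u, nullJ J u -> hinner u v = 0.

Definition poincare {H : Hilbert} (J : H -> option R) : Prop :=
  exists C, 0 < C /\
    forall u, nullJ_perp J u -> ERle (Some (hnorm u)) (option_map (fun r => C * r) (J u)).

Definition subdiff {H : Hilbert} (J : H -> option R) (u p : H) : Prop :=
  exists r, J u = Some r /\
    forall v s, J v = Some s -> r + hinner p (hsub v u) <= s.

Definition min_subgrad {H : Hilbert} (J : H -> option R) (u p : H) : Prop :=
  subdiff J u p /\ forall q, subdiff J u q -> hnorm p <= hnorm q.

Definition gradient_flow {H : Hilbert} (J : H -> option R) (g : H)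
    (u p : R -> H) : Prop :=
  u 0 = g /\
  (forall t, 0 <= t -> forall eps, 0 < eps -> exists delta, 0 < delta /\
     forall s, 0 <= s -> Rabs (s - t) < delta -> hnorm (hsub (u s) (u t)) < eps) /\
  (forall t, 0 < t ->
     min_subgrad J (u t) (p t) /\
     forall eps, 0 < eps -> exists delta, 0 < delta /\
       forall h, 0 < h < delta ->
         hnorm (hadd (hscal (/ h) (hsub (u (t + h)) (u t))) (p t)) < eps).

Definition extinction_time {H : Hilbert} (u : R -> H) (T : R) : Prop :=
  0 < T /\ (forall t, T <= t -> u t = hzero) /\ (forall t, 0 <= t < T -> u t <> hzero).

Definition weak_integral {H : Hilbert} (p : R -> H) (a b : R) (v : H) : Prop :=
  forall h : H, exists pr : Riemann_integrable (fun s => hinner (p s) h) a b,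
    RiemannInt pr = hinner v h.

Definition extinction_profile {H : Hilbert} (J : H -> option R) (g pstar : H) : Prop :=
  exists (u p : R -> H) (T : R) (tk : nat -> R) (I : nat -> H),
    gradient_flow J g u p /\ extinction_time u T /\
    (forall k, 0 < tk k < T) /\ (forall k, tk k < tk (S k)) /\ Un_cv tk T /\
    (forall k, weak_integral p (tk k) T (I k)) /\
    hconv (fun k => hscal (/ (T - tk k)) (I k)) pstar.

Definition schemeS {H : Hilbert} (J : H -> option R) (f : H)
    (fs ps : nat -> H) : Prop :=
  fs 0%nat = f /\
  forall n,
    (fs n = hzero -> fs (S n) = hzero) /\
    (fs n <> hzero ->
       extinction_profile J (fs n) (ps n) /\
       fs (S n) = hsub (fs n)
         (hscal (hinner (fs n) (ps n) / (hnorm (ps n))^2) (ps n))).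

From Stdlib Require Import Reals Lra Classical.
Open Scope R_scope.

(* One step of scheme (S) replaces f_n by f_{n+1} = f_n - c_n p_n*,
   the orthogonal projection of f_n onto the hyperplane orthogonal to p_n*.
   Pythagoras then gives, with t_n := <f_n,p_n*>^2 / ||p_n*||^2,
       ||f_{n+1} - f_n||^2 = t_n     and     ||f_{n+1}||^2 = ||f_n||^2 - t_n,
   and both identities also hold trivially once the scheme has stopped
   (f_n = 0).  Hence the partial sums of t_n telescope to
   ||f||^2 - ||f_{N+1}||^2 <= ||f||^2: the series of nonnegative terms t_n is
   bounded, hence convergent, and the series of squared increments is the very
   same series. *)

Section InnerProductAlgebra.
Variable H : Hilbert.

Lemma inner_zero_l (y : H) : hinner hzero y = 0.
Proof.
  assert (E := hinner_add_l H hzero hzero y). rewrite hadd_0 in E. lra.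
Qed.

Lemma inner_opp_l (x y : H) : hinner (hopp x) y = - hinner x y.
Proof.
  assert (E := hinner_add_l H x (hopp x) y).
  rewrite hadd_opp, inner_zero_l in E. lra.
Qed.

Lemma inner_add_r (x y z : H) : hinner z (hadd x y) = hinner z x + hinner z y.
Proof. rewrite !(hinner_sym H z). apply hinner_add_l. Qed.

Lemma inner_opp_r (x y : H) : hinner y (hopp x) = - hinner y x.
Proof. rewrite !(hinner_sym H y). apply inner_opp_l. Qed.

Lemma inner_scal_r (a : R) (x y : H) : hinner y (hscal a x) = a * hinner y x.
Proof. rewrite !(hinner_sym H y). apply hinner_scal_l. Qed.

Lemma hnorm_sq (x : H) : (hnorm x)^2 = hinner x x.
Proof. unfold hnorm. apply pow2_sqrt, hinner_pos. Qed.

Lemma hnorm_zero : hnorm (@hzero H) = 0.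
Proof. unfold hnorm. rewrite inner_zero_l. apply sqrt_0. Qed.

(* Pythagoras for the projection g = f - (<f,p>/||p||^2) p of f onto the
   hyperplane orthogonal to p: the step has squared length <f,p>^2/||p||^2
   and removes exactly that amount from ||f||^2.  For p = 0 both sides
   degenerate consistently, since then <f,p> = 0. *)
Lemma projection_pythagoras (f p : H) :
  let t := (hinner f p)^2 / (hnorm p)^2 in
  let g := hsub f (hscal (hinner f p / (hnorm p)^2) p) in
  (hnorm (hsub g f))^2 = t /\ (hnorm g)^2 = (hnorm f)^2 - t.
Proof.
  intros t g. unfold t, g, hsub. rewrite !hnorm_sq.
  repeat rewrite ?hinner_add_l, ?inner_add_r, ?inner_opp_l, ?inner_opp_r,
    ?hinner_scal_l, ?inner_scal_r.
  rewrite (hinner_sym H p f).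
  destruct (Req_dec (hinner p p) 0) as [Hp0 | Hp0].
  - assert (p = hzero) as -> by (apply hinner_def; exact Hp0).
    rewrite inner_zero_l, (hinner_sym H f hzero), inner_zero_l.
    unfold Rdiv. split; ring.
  - split; field; exact Hp0.
Qed.

End InnerProductAlgebra.

Definition scheme_term {H : Hilbert} (fs ps : nat -> H) (n : nat) : R :=
  (hinner (fs n) (ps n))^2 / (hnorm (ps n))^2.

Lemma scheme_step {H : Hilbert} (J : H -> option R) (f : H) (fs ps : nat -> H)
  (hS : schemeS J f fs ps) (n : nat) :
  (hnorm (hsub (fs (S n)) (fs n)))^2 = scheme_term fs ps n /\
  (hnorm (fs (S n)))^2 = (hnorm (fs n))^2 - scheme_term fs ps n.
Proof.
  destruct hS as [_ Hstep]. destruct (Hstep n) as [Hstop Hrun].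
  unfold scheme_term.
  destruct (classic (fs n = hzero)) as [Hz | Hnz].
  - rewrite (Hstop Hz), Hz. unfold hsub.
    rewrite hadd_opp, inner_zero_l, hnorm_zero. unfold Rdiv. split; ring.
  - destruct (Hrun Hnz) as [_ ->]. apply projection_pythagoras.
Qed.

Lemma scheme_partial_sum {H : Hilbert} (J : H -> option R) (f : H)
  (fs ps : nat -> H) (hS : schemeS J f fs ps) (N : nat) :
  sum_f_R0 (scheme_term fs ps) N = (hnorm f)^2 - (hnorm (fs (S N)))^2.
Proof.
  induction N as [| N IH].
  - cbn [sum_f_R0]. rewrite (proj2 (scheme_step J f fs ps hS 0)), (proj1 hS). ring.
  - rewrite tech5, IH, (proj2 (scheme_step J f fs ps hS (S N))). ring.
Qed.

Lemma nonneg_bounded_series_converges (s : nat -> R) (B : R) :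
  (forall n, 0 <= s n) -> (forall N, sum_f_R0 s N <= B) ->
  exists l, infinite_sum s l.
Proof.
  intros Hpos Hbound.
  destruct (growing_cv (sum_f_R0 s)) as [l Hl].
  - intro n. simpl. specialize (Hpos (S n)). lra.
  - exists B. intros x [N ->]. apply Hbound.
  - exists l. exact Hl.
Qed.

Lemma infinite_sum_ext (s s' : nat -> R) (l : R) :
  (forall n, s n = s' n) -> infinite_sum s l -> infinite_sum s' l.
Proof.
  intros Heq Hs eps Heps. destruct (Hs eps Heps) as [N HN].
  exists N. intros n Hn. rewrite <- (sum_eq s s' n) by (intros i _; apply Heq).
  exact (HN n Hn).
Qed.

Theorem corollary1 (H : Hilbert) (J : H -> option R)
  (Jproper : proper J) (Jconvex : convex J) (Jlsc : lsc J)
  (Jhom : abs_one_homogeneous J) (Jpoinc : poincare J)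
  (f : H) (hf : nullJ_perp J f) (fs ps : nat -> H)
  (hS : schemeS J f fs ps) :
  exists l : R,
    infinite_sum (fun n => (hnorm (hsub (fs (S n)) (fs n)))^2) l /\
    infinite_sum (fun n => (hinner (fs n) (ps n))^2 / (hnorm (ps n))^2) l.
Proof.
  assert (Hincr : forall n, (hnorm (hsub (fs (S n)) (fs n)))^2 = scheme_term fs ps n)
    by (intro n; apply (scheme_step J f fs ps hS)).
  destruct (nonneg_bounded_series_converges (scheme_term fs ps) ((hnorm f)^2))
    as [l Hl].
  - intro n. rewrite <- Hincr. apply pow2_ge_0.
  - intro N. rewrite (scheme_partial_sum J f fs ps hS).
    specialize (pow2_ge_0 (hnorm (fs (S N)))). lra.
  - exists l. split.
    + apply (infinite_sum_ext (scheme_term fs ps)); [| exact Hl].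
      intro n. symmetry. apply Hincr.
    + exact Hl.
Qed.
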